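(* Let $\mathbb{K}$ be a field of characteristic not $2$, $p\geq 1$, $\lambda,\mu\in\mathbb{K}$, and $f:M_{1,p}(\mathbb{K})\to\mathbb{K}$, $g:M_{p,1}(\mathbb{K})\to\mathbb{K}$ linear forms. Suppose that for every $L\in M_{1,p}(\mathbb{K})$ and $C\in M_{p,1}(\mathbb{K})$, the matrix $$M_{L,C}=\begin{bmatrix}0&L&0\\ \mu C&0_{p\times p}&C\\ f(L)+g(C)&\lambda L&0\end{bmatrix}\in M_{p+2}(\mathbb{K})$$ has at most two distinct eigenvalues in $\overline{\mathbb{K}}$. Then $\lambda+\mu=0$. If moreover $\mathbb{K}$ has characteristic not $3$, then also $f=0$ and $g=0$.
   Context: $\overline{\mathbb{K}}$ is an algebraic closure of $\mathbb{K}$. *)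

From HB Require Import structures.
From mathcomp Require Import all_boot all_order all_algebra.
Set Implicit Arguments. Unset Strict Implicit. Unset Printing Implicit Defensive.
Import Order.TTheory GRing.Theory Num.Theory.
Local Open Scope ring_scope.

Definition MLC (K : fieldType) (p : nat) (lambda mu : K)
  (f : 'rV[K]_p -> K) (g : 'cV[K]_p -> K) (L : 'rV[K]_p) (C : 'cV[K]_p)
  : 'M[K]_(1 + p + 1) :=
  col_mx
    (col_mx (row_mx (row_mx (0 : 'M[K]_(1,1)) L) (0 : 'M[K]_(1,1)))
            (row_mx (row_mx (mu *: C) (0 : 'M[K]_(p,p))) C))
    (row_mx (row_mx ((f L + g C)%:M : 'M[K]_(1,1)) (lambda *: L))
            (0 : 'M[K]_(1,1))).

Definition at_most_two_eigenvalues (F : fieldType) (n : nat) (A : 'M[F]_n) :=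
  forall a b c : F, eigenvalue A a -> eigenvalue A b -> eigenvalue A c ->
    a = b \/ a = c \/ b = c.

From HB Require Import structures.
From mathcomp Require Import all_boot all_order all_algebra ring.
Import GRing.Theory.
Local Open Scope ring_scope.
Set Implicit Arguments. Unset Strict Implicit. Unset Printing Implicit Defensive.

(* Write s = f(L) + g(C), t = L C and kappa = lambda + mu.  For t <> 0, every
   root r of the depressed cubic  r^3 = t (kappa r + s)  is an eigenvalue of
   M_{L,C}, with the explicit left eigenvector [r^2/t - lambda, (r/t) L, 1].
   Over the algebraically closed field Kbar, a depressed cubic r^3 = u r + v
   with at most two distinct roots has zero discriminant 4 u^3 = 27 v^2; hence
   the hypothesis forces  4 kappa^3 t^3 = 27 s^2 t^2  in K (iota is injective).
   Taking L = l e_j^T and C = e_j gives, for every l in K,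
     4 kappa^3 l^3 = 27 (l f(e_j^T) + g(e_j))^2 l^2,
   a quartic in l with zero constant and linear terms.  Evaluating at
   l = 1, -1, 2 (characteristic <> 2) pins its coefficients down enough to
   get kappa = 0, and, when 3 <> 0, also f(e_j^T) = g(e_j) = 0, so the linear
   forms f and g vanish on a basis. *)

(* M_{L,C} with its bottom-left entry f(L) + g(C) replaced by an arbitrary s;
   the eigenvalue analysis only depends on s. *)
Definition cornerMx (F : fieldType) (p : nat) (lambda mu s : F)
  (L : 'rV[F]_p) (C : 'cV[F]_p) : 'M[F]_(1 + p + 1) :=
  col_mx
    (col_mx (row_mx (row_mx (0 : 'M[F]_(1,1)) L) (0 : 'M[F]_(1,1)))
            (row_mx (row_mx (mu *: C) (0 : 'M[F]_(p,p))) C))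
    (row_mx (row_mx (s%:M : 'M[F]_(1,1)) (lambda *: L))
            (0 : 'M[F]_(1,1))).

Lemma mul_row_cornerMx (F : fieldType) p (la mu s t a b k : F)
    (L : 'rV[F]_p) (C : 'cV[F]_p) :
  L *m C = t%:M ->
  row_mx (row_mx a%:M (k *: L)) b%:M *m cornerMx la mu s L C
  = row_mx (row_mx (k * mu * t + b * s)%:M ((a + b * la) *: L)) (k * t)%:M.
Proof.
move=> hLC.
rewrite /cornerMx !mul_row_col !mul_mx_row !mulmx0 !mul_scalar_mx.
rewrite -!scalemxAl -scalemxAr hLC !add_row_mx ?scaler0 ?addr0 ?add0r.
by rewrite !scale_scalar_mx -!raddfD /= scalerA -scalerDl mulrA.
Qed.

Lemma cornerMx_eigenvalue (F : fieldType) p (la mu s t r : F)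
    (L : 'rV[F]_p) (C : 'cV[F]_p) :
  L *m C = t%:M -> t != 0 -> r ^+ 3 = t * ((la + mu) * r + s) ->
  eigenvalue (cornerMx la mu s L C) r.
Proof.
move=> hLC tn0 hr; apply/eigenvalueP.
exists (row_mx (row_mx (r ^+ 2 / t - la)%:M ((r / t) *: L)) 1%:M); last first.
  rewrite !row_mx_eq0 negb_and orbC; apply/orP; left.
  by apply/eqP => /matrixP/(_ 0 0); rewrite !mxE /= => /eqP; rewrite oner_eq0.
rewrite (mul_row_cornerMx _ _ _ _ _ _ hLC) !scale_row_mx !scale_scalar_mx scalerA.
congr (row_mx (row_mx _%:M (_ *: L)) _%:M); last by field.
  by transitivity (r ^+ 3 / t - r * la); [rewrite hr | ]; field.
by field.
Qed.

Lemma depressed_cubic_disc (F : closedFieldType) (u v : F) :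
  (forall r1 r2 r3, r1 ^+ 3 = u * r1 + v -> r2 ^+ 3 = u * r2 + v ->
     r3 ^+ 3 = u * r3 + v -> r1 = r2 \/ r1 = r3 \/ r2 = r3) ->
  4 * u ^+ 3 = 27 * v ^+ 2.
Proof.
move=> two_roots.
have [r1 root1] := @solve_monicpoly F 3
  (fun i => if i == 0%N then v else if i == 1%N then u else 0) isT.
rewrite !big_ord_recr big_ord0 /= in root1.
have [r2 root2] := @solve_monicpoly F 2
  (fun i => if i == 0%N then u - r1 ^+ 2 else - r1) isT.
rewrite !big_ord_recr big_ord0 /= in root2.
have ev : v = r1 ^+ 3 - u * r1 by rewrite root1; ring.
have eu : u = r2 ^+ 2 + r1 * r2 + r1 ^+ 2 by rewrite root2; ring.
pose r3 := - r1 - r2.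
have disc : 4 * u ^+ 3 - 27 * v ^+ 2 = ((r1 - r2) * (r1 - r3) * (r2 - r3)) ^+ 2.
  by rewrite /r3 ev eu; ring.
have root_eq r : r ^+ 3 - u * r - v = (r - r1) * (r - r2) * (r - r3).
  by rewrite /r3 ev eu; ring.
have root r : (r == r1) || (r == r2) || (r == r3) -> r ^+ 3 = u * r + v.
  move=> hr; apply/eqP.
  by rewrite -subr_eq0 opprD addrA root_eq !mulf_eq0 !subr_eq0.
have [h1 h2 h3] : [/\ r1 ^+ 3 = u * r1 + v, r2 ^+ 3 = u * r2 + v
                     & r3 ^+ 3 = u * r3 + v].
  by split; apply: root; rewrite eqxx ?orbT.
apply/eqP; rewrite -subr_eq0 disc expf_eq0 /= !mulf_eq0 !subr_eq0.
by have [->|[->|->]] := two_roots r1 r2 r3 h1 h2 h3; rewrite eqxx ?orbT.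
Qed.

Lemma cornerMx_disc (F : closedFieldType) p (la mu s t : F)
    (L : 'rV[F]_p) (C : 'cV[F]_p) :
  at_most_two_eigenvalues (cornerMx la mu s L C) -> L *m C = t%:M ->
  4 * (la + mu) ^+ 3 * t ^+ 3 = 27 * s ^+ 2 * t ^+ 2.
Proof.
move=> two_eig hLC; have [->|tn0] := eqVneq t 0; first by ring.
have eig r : r ^+ 3 = (la + mu) * t * r + s * t ->
    eigenvalue (cornerMx la mu s L C) r.
  by move=> hr; apply: cornerMx_eigenvalue hLC tn0 _; rewrite hr; ring.
have disc := depressed_cubic_disc (fun r1 r2 r3 h1 h2 h3 =>
  two_eig _ _ _ (eig _ h1) (eig _ h2) (eig _ h3)).
transitivity (4 * ((la + mu) * t) ^+ 3); first by ring.
by rewrite disc; ring.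
Qed.

Lemma map_MLC (K Kbar : fieldType) (iota : {rmorphism K -> Kbar}) p
    (la mu : K) (f : 'rV[K]_p -> K) (g : 'cV[K]_p -> K) L C :
  map_mx iota (MLC la mu f g L C) =
  cornerMx (iota la) (iota mu) (iota (f L + g C)) (map_mx iota L) (map_mx iota C).
Proof.
by rewrite /MLC /cornerMx !map_col_mx !map_row_mx !map_mx0 !map_mxZ map_scalar_mx.
Qed.

Lemma MLC_disc (K : fieldType) (Kbar : closedFieldType)
    (iota : {rmorphism K -> Kbar}) p (la mu t : K)
    (f : 'rV[K]_p -> K) (g : 'cV[K]_p -> K) L C :
  at_most_two_eigenvalues (map_mx iota (MLC la mu f g L C)) -> L *m C = t%:M ->
  4 * (la + mu) ^+ 3 * t ^+ 3 = 27 * (f L + g C) ^+ 2 * t ^+ 2.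
Proof.
rewrite map_MLC => two_eig hLC.
have hLC' : map_mx iota L *m map_mx iota C = (iota t)%:M.
  by rewrite -map_mxM hLC map_scalar_mx.
have := cornerMx_disc two_eig hLC'.
rewrite -rmorphD -!rmorphXn -!(rmorph_nat iota) -!rmorphM.
exact: fmorph_inj.
Qed.

Lemma three_point_quartic (K : fieldType) (c2 c3 c4 : K) : 2 != 0 :> K ->
  (forall l, c4 * l ^+ 4 + c3 * l ^+ 3 + c2 * l ^+ 2 = 0) ->
  [/\ c3 = 0, c2 = - c4 & 3 * c4 = 0].
Proof.
move=> two_neq0.
pose q l := c4 * l ^+ 4 + c3 * l ^+ 3 + c2 * l ^+ 2.
move=> vanish; have {}vanish l : q l = 0 := vanish l.
have half (x : K) : 2 * x = 0 -> x = 0.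
  by move/eqP; rewrite mulf_eq0 (negPf two_neq0) => /eqP.
have c3_0 : c3 = 0.
  apply: half; have -> : 2 * c3 = q 1 - q (-1) by rewrite /q; ring.
  by rewrite !vanish subrr.
have c2E : c2 = - c4.
  apply/eqP; rewrite -addr_eq0; apply/eqP/half.
  have -> : 2 * (c2 + c4) = q 1 + q (-1) by rewrite /q; ring.
  by rewrite !vanish addr0.
split=> //; apply/half/half.
have -> : 2 * (2 * (3 * c4)) = q 2 by rewrite /q c3_0 c2E; ring.
exact: vanish.
Qed.

(* If 4 ka^3 l^3 = 27 (l al + be)^2 l^2 for every l, then ka = 0, and also
   al = be = 0 when 3 <> 0.  The cubic coefficient 4 ka^3 - 54 al be vanishes,
   and 54 al be = 0 in any characteristic since its square is a multiple of
   3 * 27 al^2 = 0. *)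
Lemma vanishing_disc (K : fieldType) (ka al be : K) : 2 != 0 :> K ->
  (forall l, 4 * ka ^+ 3 * l ^+ 3 = 27 * (l * al + be) ^+ 2 * l ^+ 2) ->
  ka = 0 /\ (3 != 0 :> K -> al = 0 /\ be = 0).
Proof.
move=> two_neq0 disc.
have cancel (n : nat) (x : K) k : n%:R != 0 :> K -> n%:R * x ^+ k.+1 = 0 -> x = 0.
  by move=> n_neq0 /eqP; rewrite mulf_eq0 (negPf n_neq0) expf_eq0 /= => /eqP.
have quartic l : - 27 * al ^+ 2 * l ^+ 4 + (4 * ka ^+ 3 - 54 * al * be) * l ^+ 3
                 + (- 27 * be ^+ 2) * l ^+ 2 = 0.
  rewrite -(subrr (27 * (l * al + be) ^+ 2 * l ^+ 2)).
  by rewrite -[X in _ = X - _]disc; ring.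
have [c3_0 c2E c4_3] := three_point_quartic two_neq0 quartic.
have four_neq0 : 4 != 0 :> K by rewrite (natrM _ 2 2) mulf_neq0.
have albe0 : 54 * al * be = 0.
  apply: (@cancel 1 _ 1 (oner_neq0 K)).
  have -> : 1%:R * (54 * al * be) ^+ 2 = - 36 * be ^+ 2 * (3 * (- 27 * al ^+ 2)).
    by ring.
  by rewrite c4_3 mulr0.
have ka0 : ka = 0.
  by apply: (cancel 4 _ 2 four_neq0); rewrite -c3_0 albe0 subr0.
split=> // three_neq0.
have al0 : al = 0.
  apply: (cancel 81 _ 1); first by rewrite (natrX _ 3 4) expf_neq0.
  have -> : 81%:R * al ^+ 2 = - (3 * (- 27 * al ^+ 2)) by ring.
  by rewrite c4_3 oppr0.
split=> //; apply: (cancel 27 _ 1); first by rewrite (natrX _ 3 3) expf_neq0.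
have -> : 27%:R * be ^+ 2 = - (- 27 * be ^+ 2) by ring.
by rewrite c2E al0; ring.
Qed.

Lemma linear_form_eq0 (K : fieldType) m n (h : {linear 'M[K]_(m, n) -> K^o}) :
  (forall i j, h (delta_mx i j) = 0) -> forall A, h A = 0.
Proof.
move=> h_delta A; rewrite (matrix_sum_delta A) linear_sum big1 // => i _.
by rewrite linear_sum big1 // => j _; rewrite linearZ /= h_delta scaler0.
Qed.

Lemma natr_prime_neq0 (K : fieldType) (n : nat) :
  prime n -> n \notin [pchar K] -> n%:R != 0 :> K.
Proof. by move=> n_prime; apply: contra => n0; rewrite inE n_prime n0. Qed.

Theorem mainTheorem16 (K : fieldType) (Kbar : closedFieldType)
  (iota : {rmorphism K -> Kbar})
  (Kbar_alg : forall x : Kbar, algebraicOver iota x)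
  (charK2 : 2 \notin [pchar K])
  (p : nat) (hp : (1 <= p)%N) (lambda mu : K)
  (f : {linear 'rV[K]_p -> K^o}) (g : {linear 'cV[K]_p -> K^o})
  (H : forall (L : 'rV[K]_p) (C : 'cV[K]_p),
         at_most_two_eigenvalues (map_mx iota (MLC lambda mu f g L C))) :
  lambda + mu = 0 /\
  (3 \notin [pchar K] -> (forall L, f L = 0) /\ (forall C, g C = 0)).
Proof.
have basis_disc j l : 4 * (lambda + mu) ^+ 3 * l ^+ 3 =
    27 * (l * f (delta_mx 0 j) + g (delta_mx j 0)) ^+ 2 * l ^+ 2.
  have LC : (l *: delta_mx 0 j) *m delta_mx j 0 = l%:M :> 'M[K]_1.
    rewrite -scalemxAl mul_delta_mx -scalemx1; congr (_ *: _).
    by apply/matrixP => a b; rewrite !ord1 !mxE.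
  by have := MLC_disc (H _ _) LC; rewrite linearZ.
have two_neq0 := natr_prime_neq0 (isT : prime 2) charK2.
have [-> _] := vanishing_disc two_neq0 (basis_disc (Ordinal hp)).
split=> // charK3.
have fg0 j := (vanishing_disc two_neq0 (basis_disc j)).2
  (natr_prime_neq0 (isT : prime 3) charK3).
split; apply: linear_form_eq0 => i j; first by rewrite (ord1 i); case: (fg0 j).
by rewrite (ord1 j); case: (fg0 i).
Qed.
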